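(* Let $G$ be a graph with vertex set $V$ of order $n$ and let $k$ be an integer with $2(k-1)>n\ge 2$. Let $H$ be the graph with vertex set $V\cup V'\cup W$, where $V'=\{u':u\in V\}$ is a set of $n$ new vertices and $W$ is a set of $2(k-1)$ new vertices, whose edges are: all edges of $G$; the edges $uu'$ for $u\in V$; $k-1$ pairwise disjoint edges covering $W$ (so $H[W]\cong (k-1)K_2$); and all edges between $V$ and $W$ (no edges between $V'$ and $W$, and no further edges). Then $\alpha(H)=n+k-1$, $\mathrm{diss}(H)=n+2(k-1)$, $\nu_s(H)\ge k-1$, and $$\alpha(G)\ge k\iff \nu_s(H)\ge k \iff \mathrm{diss}(H)\ne \alpha(H)+\nu_s(H).$$
   Context: All graphs are finite, simple and undirected. A set $I$ of vertices of a graph $G$ is a dissociation set if the induced subgraph $G[I]$ has maximum degree at most $1$; $\mathrm{diss}(G)$ is the maximum order of a dissociation set in $G$. $\alpha(G)$ is the independence number. An induced matching is a matching $N$ such that the subgraph of $G$ induced by the vertices covered by $N$ has edge set exactly $N$; $\nu_s(G)$ is the maximum size of an induced matching in $G$. *)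

(* A simple graph on a finType T is a symmetric irreflexive rel. *)
From mathcomp Require Import all_boot.
Set Implicit Arguments. Unset Strict Implicit. Unset Printing Implicit Defensive.

Section Graphs.
Variable T : finType.
Variable e : rel T.

Definition independent (S : {set T}) : bool :=
  [forall x in S, forall y in S, ~~ e x y].

Definition dissociation (S : {set T}) : bool :=
  [forall x in S, #|[set y in S | e x y]| <= 1].

Definition is_edge (A : {set T}) : bool :=
  [exists x, exists y, e x y && (A == [set x; y])].

Definition induced_matching (N : {set {set T}}) : bool :=
  [&& [forall A in N, is_edge A], trivIset N &
      [forall x in cover N, forall y in cover N, e x y ==> ([set x; y] \in N)]].

Definition alpha : nat := \max_(S : {set T} | independent S) #|S|.
Definition diss : nat := \max_(S : {set T} | dissociation S) #|S|.
Definition nu_s : nat := \max_(N : {set {set T}} | induced_matching N) #|N|.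
End Graphs.

(* Vertex set of H: V (inl (inl u)), V' (inl (inr u) = u'), and
   W = 'I_(k-1) * bool, the matching edges of W being (i,false)(i,true). *)
Definition Hvert (T : finType) (k : nat) : finType :=
  ((T + T) + ('I_(k - 1) * bool))%type.

Definition Hrel (T : finType) (e : rel T) (k : nat) : rel (Hvert T k) :=
  fun x y =>
    match x, y with
    | inl (inl u), inl (inl v) => e u v
    | inl (inl u), inl (inr v) => u == v
    | inl (inr u), inl (inl v) => u == v
    | inl (inl _), inr _ => true
    | inr _, inl (inl _) => true
    | inr (i, b), inr (j, c) => (i == j) && (b != c)
    | _, _ => false
    end.
Arguments Hrel {T} e k.

From mathcomp Require Import all_boot zify.
Set Implicit Arguments. Unset Strict Implicit. Unset Printing Implicit Defensive.

(* V' together with one end of each edge of W is independent in H, and V' with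
   all of W is a dissociation set.  Conversely an independent set meeting V
   avoids W, while a dissociation set meeting V keeps at most one vertex of W,
   so it has at most 2n + 1 <= n + 2(k-1) vertices.  In an induced matching of
   H either every edge meets V, and one V-end per edge is independent in G, or
   some edge lies in W, and since W is complete to V all edges then lie in W.
   Hence nu_s(H) = max(alpha(G), k-1) and the equivalences are arithmetic. *)

Section GraphInvariants.
Variables (V : finType) (r : rel V).

Lemma independentP (S : {set V}) :
  reflect {in S &, forall x y, ~~ r x y} (independent r S).
Proof.
apply: (iffP forall_inP) => [h x y xS yS | h x xS].
  by move/forall_inP: (h x xS); apply.
by apply/forall_inP => y; apply: h.
Qed.

Lemma dissociationP (S : {set V}) :
  reflect {in S, forall x, #|[set y in S | r x y]| <= 1} (dissociation r S).
Proof. exact: forall_inP. Qed.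

Lemma alpha_ge (S : {set V}) : independent r S -> #|S| <= alpha r.
Proof. exact: (@leq_bigmax_cond _ (independent r) (fun S => #|S|)). Qed.

Lemma alpha_le n : (forall S, independent r S -> #|S| <= n) -> alpha r <= n.
Proof. by move=> h; apply/bigmax_leqP. Qed.

Lemma diss_ge (S : {set V}) : dissociation r S -> #|S| <= diss r.
Proof. exact: (@leq_bigmax_cond _ (dissociation r) (fun S => #|S|)). Qed.

Lemma diss_le n : (forall S, dissociation r S -> #|S| <= n) -> diss r <= n.
Proof. by move=> h; apply/bigmax_leqP. Qed.

Lemma nu_s_ge N : induced_matching r N -> #|N| <= nu_s r.
Proof. exact: (@leq_bigmax_cond _ (induced_matching r) (fun N => #|N|)). Qed.

Lemma nu_s_le n : (forall N, induced_matching r N -> #|N| <= n) -> nu_s r <= n.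
Proof. by move=> h; apply/bigmax_leqP. Qed.

Lemma set2_eq (a b x y : V) :
  x \in [set a; b] -> y \in [set a; b] -> x != y -> [set x; y] = [set a; b].
Proof.
rewrite !inE => /orP[]/eqP-> /orP[]/eqP->; rewrite ?eqxx // => _.
exact: setUC.
Qed.

Section InducedMatching.
Variables (N : {set {set V}}) (matchN : induced_matching r N).

Lemma induced_matching_edge A :
  A \in N -> exists x y, r x y /\ A = [set x; y].
Proof.
case/and3P: matchN => /forall_inP edgeN _ _ /edgeN/existsP[x /existsP[y]].
by case/andP=> rxy /eqP->; exists x, y.
Qed.

Lemma induced_matching_meet A B x :
  A \in N -> B \in N -> x \in A -> x \in B -> A = B.
Proof.
case/and3P: matchN => _ /trivIsetP disjN _ AN BN xA xB.
apply/eqP; apply: contraTT xB => neqAB.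
by rewrite (disjointFr (disjN _ _ AN BN neqAB) xA).
Qed.

Lemma induced_matching_adj A B x y :
  A \in N -> B \in N -> x \in A -> y \in B -> r x y -> A = B.
Proof.
move=> AN BN xA yB rxy; have := matchN; case/and3P=> _ _ /forall_inP inducedN.
have xN : x \in cover N by apply/bigcupP; exists A.
have yN : y \in cover N by apply/bigcupP; exists B.
have xyN : [set x; y] \in N.
  by move/forall_inP: (inducedN x xN) => /(_ y yN); rewrite rxy.
rewrite (induced_matching_meet AN xyN xA) ?set21 //.
exact: induced_matching_meet xyN BN (set22 x y) yB.
Qed.

Lemma induced_matching_choice (D : finType) (f : D -> V) (d0 : D) :
  {in N, forall A : {set V}, exists d, f d \in A} ->
  exists2 g : {set V} -> D,
    {in N, forall A : {set V}, f (g A) \in A} & {in N &, injective g}.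
Proof.
move=> marked; pose g (A : {set V}) := odflt d0 [pick d | f d \in A].
have gP : {in N, forall A : {set V}, f (g A) \in A}.
  move=> A /marked[d fdA]; rewrite /g; case: pickP => [// | none].
  by rewrite none in fdA.
exists g => // A B AN BN gAB.
by apply: (induced_matching_meet AN BN (gP A AN)); rewrite gAB gP.
Qed.

End InducedMatching.

Lemma induced_matching_pairs (D : finType) (P : {set D}) (f g : D -> V) :
  irreflexive r -> {in P, forall i, r (f i) (g i)} ->
  {in P &, forall i j x y,
     x \in [set f i; g i] -> y \in [set f j; g j] -> r x y -> i = j} ->
  induced_matching r [set [set f i; g i] | i in P] /\
  #|[set [set f i; g i] | i in P]| = #|P|.
Proof.
move=> irr edgeP apartP.
have meetP : {in P &, forall i j x,
                 x \in [set f i; g i] -> x \in [set f j; g j] -> i = j}.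
  move=> i j iP jP x /set2P[]-> xj.
    by symmetry; apply: apartP jP iP _ _ xj (set22 _ _) (edgeP i iP).
  exact: apartP iP jP _ _ (set21 _ _) xj (edgeP i iP).
have injP : {in P &, injective (fun i => [set f i; g i])}.
  by move=> i j iP jP eqij; apply: (meetP i j iP jP (f i)); rewrite -?eqij set21.
split; last by rewrite card_in_imset.
apply/and3P; split.
- apply/forall_inP => _ /imsetP[i iP ->].
  by apply/existsP; exists (f i); apply/existsP; exists (g i); rewrite edgeP ?eqxx.
- apply/trivIsetP => _ _ /imsetP[i iP ->] /imsetP[j jP ->] neqij.
  apply/pred0P => x /=; apply: contraNF neqij => /andP[xi xj].
  by rewrite (meetP i j iP jP x).
- apply/forall_inP => x /bigcupP[_ /imsetP[i iP ->] xi].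
  apply/forall_inP => y /bigcupP[_ /imsetP[j jP ->] yj].
  apply/implyP => rxy; have eqij := apartP i j iP jP x y xi yj rxy; subst j.
  apply/imsetP; exists i => //; apply: set2_eq xi yj _.
  by apply: contraTneq rxy => ->; rewrite irr.
Qed.

End GraphInvariants.

Section ConstructionH.
Variables (T : finType) (e : rel T) (k : nat).

Local Notation H := (Hrel e k).
Local Notation vV u := (inl (inl u) : Hvert T k).
Local Notation vV' u := (inl (inr u) : Hvert T k).
Local Notation vW w := (inr w : Hvert T k).

Definition partV (S : {set Hvert T k}) : {set T} := [set u | vV u \in S].
Definition partV' (S : {set Hvert T k}) : {set T} := [set u | vV' u \in S].
Definition partW (S : {set Hvert T k}) : {set 'I_(k - 1) * bool} :=
  [set w | vW w \in S].

Lemma card_parts (S : {set Hvert T k}) :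
  #|S| = #|partV S| + #|partV' S| + #|partW S|.
Proof. by rewrite -sum1_card !big_sumType /= !sum1dep_card. Qed.

Lemma card_W : #|[set: 'I_(k - 1) * bool]| = 2 * (k - 1).
Proof. by rewrite cardsT card_prod card_ord card_bool mulnC. Qed.

Lemma Hrel_irreflexive : irreflexive e -> irreflexive H.
Proof. by move=> irr [[u|u]|[i b]] /=; rewrite ?irr ?eqxx ?andbF. Qed.

Lemma card_independent_le (S : {set Hvert T k}) :
  independent H S -> #|S| <= #|T| + (k - 1).
Proof.
move/independentP=> indS; rewrite card_parts.
have partVV' : #|partV S| + #|partV' S| <= #|T|.
  rewrite -cardsUI; suff -> : partV S :&: partV' S = set0.
    by rewrite cards0 addn0; apply: max_card.
  apply/setP => u; rewrite !inE; apply/negbTE/andP => -[uS u'S].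
  by have := indS _ _ uS u'S; rewrite /= eqxx.
have partW_le : #|partW S| <= k - 1.
  rewrite -(@card_in_imset _ _ fst) => [|[i b] [j c]]; last first.
    rewrite !inE /= => iS jS eqij; subst j.
    by case: b c iS jS => [] [] // iS jS; have := indS _ _ iS jS; rewrite /= eqxx.
  by apply: leq_trans (max_card _) _; rewrite card_ord.
have [-> | [u uS]] := set_0Vmem (partV S).
  by rewrite cards0 add0n; apply: leq_add => //; apply: max_card.
suff -> : partW S = set0.
  by rewrite cards0 addn0; apply: leq_trans partVV' (leq_addr _ _).
apply/setP => w; rewrite !inE; apply/negbTE; apply: contraL uS => wS.
by rewrite inE; apply/negP => uS; have := indS _ _ uS wS.
Qed.

Lemma card_dissociation_le (S : {set Hvert T k}) :
  #|T| < 2 * (k - 1) -> dissociation H S -> #|S| <= #|T| + 2 * (k - 1).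
Proof.
move=> small /dissociationP dissS; rewrite card_parts.
have partW_le : #|partW S| <= 2 * (k - 1) by rewrite -card_W subset_leq_card ?subsetT.
have [-> | [u uS]] := set_0Vmem (partV S).
  by rewrite cards0 add0n; apply: leq_add => //; apply: max_card.
have partW_le1 : #|partW S| <= 1.
  rewrite inE in uS; apply: leq_trans (dissS _ uS).
  rewrite -(@card_in_imset _ _ (fun w => vW w)) => [|? ? _ _ []//].
  by apply/subset_leq_card/subsetP => _ /imsetP[w + ->]; rewrite !inE => ->.
have := max_card (partV S); have := max_card (partV' S); lia.
Qed.

Definition max_independent : {set Hvert T k} :=
  [set x | match x with inl (inr _) => true | inr w => w.2 | _ => false end].

Definition max_dissociation : {set Hvert T k} :=
  [set x | match x with inl (inl _) => false | _ => true end].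

Lemma independent_max_independent : independent H max_independent.
Proof.
apply/independentP => x y; rewrite !inE.
by case: x y => [[u|u]|[i []]] [[v|v]|[j []]] //=; rewrite andbF.
Qed.

Lemma card_max_independent : #|max_independent| = #|T| + (k - 1).
Proof.
rewrite card_parts.
have -> : partV max_independent = set0 by apply/setP => u; rewrite !inE.
have -> : partV' max_independent = setT by apply/setP => u; rewrite !inE.
have -> : partW max_independent = setX setT [set true].
  by apply/setP => -[i []]; rewrite !inE.
by rewrite cards0 cardsT cardsX cardsT cards1 card_ord muln1.
Qed.

Lemma dissociation_max_dissociation : dissociation H max_dissociation.
Proof.
apply/dissociationP => -[[u|u]|[i b]]; rewrite inE // => _.
  rewrite (_ : [set _ in _ | _] = set0) ?cards0 //.
  by apply/setP => -[[v|v]|[j c]]; rewrite !inE.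
apply: (@leq_trans #|[set vW (i, ~~ b)]|); last by rewrite cards1.
apply/subset_leq_card/subsetP.
by move=> [[v|v]|[j c]]; rewrite !inE //= => /andP[/eqP-> ]; case: b c => [] [].
Qed.

Lemma card_max_dissociation : #|max_dissociation| = #|T| + 2 * (k - 1).
Proof.
rewrite card_parts.
have -> : partV max_dissociation = set0 by apply/setP => u; rewrite !inE.
have -> : partV' max_dissociation = setT by apply/setP => u; rewrite !inE.
have -> : partW max_dissociation = setT by apply/setP => u; rewrite !inE.
by rewrite cards0 cardsT card_W.
Qed.

Lemma Hedge_meets_V_or_W x y :
  H x y -> (exists u, vV u \in [set x; y]) \/ (exists i, vW (i, false) \in [set x; y]).
Proof.
case: x => [[u|u]|[i b]]; first by left; exists u; rewrite set21.
  by case: y => [[v|v]|//] //= _; left; exists v; rewrite set22.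
case: y => [[v|v]|[j c]] //= => [_ | /andP[/eqP<- bc]].
  by left; exists v; rewrite set22.
by right; exists i; case: b c bc => [] [] // _; rewrite !inE eqxx ?orbT.
Qed.

Lemma k1_le_nu_s : irreflexive e -> k - 1 <= nu_s H.
Proof.
move=> irr.
have [||matchW cardW] := induced_matching_pairs (P := [set: 'I_(k - 1)])
  (f := fun i => vW (i, false)) (g := fun i => vW (i, true)) (Hrel_irreflexive irr).
- by move=> i _ /=; rewrite eqxx.
- by move=> i j _ _ x y /set2P[]-> /set2P[]-> /andP[/eqP].
- by rewrite -(card_ord (k - 1)) -cardsT -cardW nu_s_ge.
Qed.

Lemma alpha_le_nu_s : irreflexive e -> alpha e <= nu_s H.
Proof.
move=> irr; apply: alpha_le => I /independentP indI.
have [||matchI cardI] := induced_matching_pairs (P := I)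
  (f := fun u => vV u) (g := fun u => vV' u) (Hrel_irreflexive irr).
- by move=> u _ /=.
- move=> i j iI jI x y /set2P[]-> /set2P[]-> //= => [|/eqP//|/eqP//].
  by rewrite (negbTE (indI i j iI jI)).
- by rewrite -cardI nu_s_ge.
Qed.

Lemma card_matching_meeting_V_le (N : {set {set Hvert T k}}) :
  irreflexive e -> induced_matching H N ->
  {in N, forall A : {set Hvert T k}, exists u, vV u \in A} -> #|N| <= alpha e.
Proof.
move=> irr matchN meetV.
have [-> | [A0 A0N]] := set_0Vmem N; first by rewrite cards0.
have [u0 _] := meetV A0 A0N.
have [g gP injg] := induced_matching_choice matchN (f := fun u => vV u) u0 meetV.
rewrite -(card_in_imset injg); apply: alpha_ge; apply/independentP.
move=> _ _ /imsetP[A AN ->] /imsetP[B BN ->]; apply/negP => eAB.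
have eqAB := induced_matching_adj matchN AN BN (gP A AN) (gP B BN) eAB.
by move: eAB; rewrite eqAB irr.
Qed.

(* An edge of the matching missing V lies in W; since W is complete to V,
   every other edge of the matching must miss V as well. *)
Lemma card_matching_missing_V_le (N : {set {set Hvert T k}}) A0 :
  induced_matching H N -> A0 \in N -> (forall u, vV u \notin A0) -> #|N| <= k - 1.
Proof.
move=> matchN A0N offA0.
have marked A : A \in N -> (exists u, vV u \in A) \/ exists i, vW (i, false) \in A.
  by move=> /(induced_matching_edge matchN)[x [y [Hxy ->]]]; apply: Hedge_meets_V_or_W.
have [i0 i0A0] : exists i, vW (i, false) \in A0.
  by case: (marked A0 A0N) => // -[u]; rewrite (negbTE (offA0 u)).
have missV : {in N, forall A : {set Hvert T k}, exists i, vW (i, false) \in A}.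
  move=> A AN; case: (marked A AN) => // -[u uA].
  by have := offA0 u; rewrite -(induced_matching_adj matchN AN A0N uA i0A0 isT) uA.
have [g _ injg] := induced_matching_choice matchN (f := fun i => vW (i, false)) i0 missV.
by rewrite -(card_in_imset injg); apply: leq_trans (max_card _) _; rewrite card_ord.
Qed.

Lemma nu_s_le_max : irreflexive e -> nu_s H <= maxn (alpha e) (k - 1).
Proof.
move=> irr; apply: nu_s_le => N matchN.
have [meetV | ] := boolP [forall A in N, [exists u, vV u \in A]].
  rewrite leq_max (card_matching_meeting_V_le irr matchN) //.
  by move=> A AN; apply/existsP; move/forall_inP: meetV; apply.
case/forall_inPn => A0 A0N /existsPn offA0.
by rewrite leq_max (card_matching_missing_V_le matchN A0N offA0) orbT.
Qed.

End ConstructionH.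

Theorem mainTheorem10 (T : finType) (e : rel T) (k : nat) :
  symmetric e -> irreflexive e ->
  2 <= #|T| -> #|T| < 2 * (k - 1) ->
  [/\ alpha (Hrel e k) = #|T| + (k - 1),
      diss (Hrel e k) = #|T| + 2 * (k - 1),
      k - 1 <= nu_s (Hrel e k),
      (k <= alpha e <-> k <= nu_s (Hrel e k)) &
      (k <= nu_s (Hrel e k) <-> diss (Hrel e k) <> alpha (Hrel e k) + nu_s (Hrel e k))].
Proof.
move=> _ irr _ small.
have alphaH : alpha (Hrel e k) = #|T| + (k - 1).
  apply/anti_leq/andP; split; first exact/alpha_le/card_independent_le.
  by rewrite -card_max_independent alpha_ge ?independent_max_independent.
have dissH : diss (Hrel e k) = #|T| + 2 * (k - 1).
  apply/anti_leq/andP; split.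
    by apply: diss_le => S; apply: card_dissociation_le.
  by rewrite -card_max_dissociation diss_ge ?dissociation_max_dissociation.
have nuH : nu_s (Hrel e k) = maxn (alpha e) (k - 1).
  by apply/anti_leq; rewrite nu_s_le_max // geq_max alpha_le_nu_s // k1_le_nu_s.
rewrite alphaH dissH nuH; split; lia.
Qed.
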